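(* Let $G_\sigma$ be an ordered undirected graph on vertex set $\{1,\dots,p\}$ with edge set $E_\sigma$, let $U$ be a $p\times p$ positive definite matrix and let $\boldsymbol{\delta}=(\delta_1,\dots,\delta_p)$ with $\delta_i>0$ for all $i$. Then $$\int \pi^*_{U,\boldsymbol{\delta}}(L_I,D)\,d(L_I,D)<\infty,$$ and, under the probability distribution obtained by normalizing $\pi^*_{U,\boldsymbol{\delta}}$ (viewed as a distribution of $\Omega=LDL^T\in\mathbb{P}_{G_\sigma}$), $E[\Omega_{ij}]$ exists and is finite for all $i,j$.
   Context: For an ordered graph $G_\sigma$ on $\{1,\dots,p\}$ with (undirected) edge set $E_\sigma$, let $\mathbb{P}_{G_\sigma}$ be the set of $p\times p$ symmetric positive definite matrices $\Omega$ with $\Omega_{ij}=0$ whenever $i\neq j$ and $(i,j)\notin E_\sigma$. Every positive definite $\Omega$ has a unique modified Cholesky decomposition $\Omega=LDL^T$, $L$ lower triangular with unit diagonal, $D=\mathrm{diag}(D_1,\dots,D_p)$ with $D_i>0$. Let $L_I=\{L_{ij}: i>j,\ (i,j)\in E_\sigma\}$ (the independent entries); the map $\Omega\mapsto(L_I,D)$ is a bijection from $\mathbb{P}_{G_\sigma}$ onto $\mathbb{R}^{|L_I|}\times(0,\infty)^p$ (the other below-diagonal entries of $L$ are determined by the constraints $\Omega_{ij}=0$). Let $\nu_j=|\{i: i>j,(i,j)\in E_\sigma\}|$. The (unnormalized) generalized $G$-Wishart density with parameters $U,\boldsymbol\delta$ on $\mathbb{P}_{G_\sigma}$ is $\prod_{i=1}^p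 D_i^{\delta_i/2}\exp(-\tfrac12\mathrm{tr}(\Omega U))$; expressed in the coordinates $(L_I,D)$ (including the Jacobian $\prod_j D_j^{\nu_j}$) it is $$\pi^*_{U,\boldsymbol\delta}(L_I,D)=\Big(\prod_{j=1}^p D_j^{(\delta_j+2\nu_j)/2}\Big)\exp\Big(-\tfrac12\sum_{i=1}^p\sum_{j=1}^p U_{ij}\sum_{k=1}^{\min(i,j)}L_{ik}L_{jk}D_k\Big),$$ integrated with respect to Lebesgue measure on $\mathbb{R}^{|L_I|}\times(0,\infty)^p$. *)

From HB Require Import structures.
From mathcomp Require Import all_boot all_order all_algebra.
From mathcomp Require Import all_classical all_reals all_analysis.
Set Implicit Arguments. Unset Strict Implicit. Unset Printing Implicit Defensive.
Import Order.TTheory GRing.Theory Num.Theory.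
Local Open Scope ring_scope.
Local Open Scope classical_set_scope.

Section GWishart.
Variable R : realType.
Variable p : nat.

Definition posdef (U : 'M[R]_p) : Prop :=
  U^T = U /\ forall x : 'cV[R]_p, x != 0 -> 0 < (x^T *m U *m x) ord0 ord0.

(* ordered simple undirected graph on the vertices 'I_p (= {1..p} shifted) *)
Definition undirected_graph (E : rel 'I_p) : Prop :=
  symmetric E /\ irreflexive E.

Definition nu (E : rel 'I_p) (j : 'I_p) : nat :=
  #|[set i : 'I_p | (j < i)%N && E i j]|.

(* Construction of the full unit lower triangular L from the independent
   entries x (only x i j with i > j, E i j are used) and D: the remaining
   below-diagonal entries are determined, column by column, by
   Omega_ij = sum_{k<=j} L_ik L_jk D_k = 0 for non-edges (i,j), i > j. *)
Fixpoint Lcols (E : rel 'I_p) (x : 'I_p -> 'I_p -> R) (D : 'I_p -> R)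
  (m : nat) : 'M[R]_p :=
  match m with
  | 0%N => 1%:M
  | m'.+1 =>
    let F := Lcols E x D m' in
    \matrix_(i, j)
      if (j < m')%N then F i j
      else if (j == m' :> nat) then
        (if i == j then 1
         else if (i < j)%N then 0
         else if E i j then x i j
         else - (\sum_(k < p | (k < j)%N) F i k * F j k * D k) / D j)
      else (if i == j then 1 else 0)
  end.

Definition Lmat E x D : 'M[R]_p := Lcols E x D p.

Definition Omega E x D : 'M[R]_p := Lmat E x D *m diag_mx (\row_k D k) *m (Lmat E x D)^T.

Definition pistar E (U : 'M[R]_p) (delta : 'I_p -> R) x (D : 'I_p -> R) : R :=
  (\prod_(j < p) D j `^ ((delta j + 2 * (nu E j)%:R) / 2)) *
  expR (- (1/2) * \sum_(i < p) \sum_(j < p) U i j *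
          \sum_(k < p | (k <= i)%N && (k <= j)%N)
             Lmat E x D i k * Lmat E x D j k * D k).

(* Coordinates: a point of R^{|L_I|} x (0,oo)^p is stored in v : nat -> R,
   with D_j = v j and L_ij = v (p + i*p + j). *)
Definition Dof (v : nat -> R) (j : 'I_p) : R := v j.
Definition xof (v : nat -> R) (i j : 'I_p) : R := v (p + i * p + j)%N.

Definition coords (E : rel 'I_p) : seq nat :=
  iota 0 p ++
  [seq (p + nat_of_ord ij.1 * p + nat_of_ord ij.2)%N |
     ij <- enum [pred ij : 'I_p * 'I_p | (ij.2 < ij.1)%N && E ij.1 ij.2]].

Definition coord_dom (k : nat) : set R :=
  if (k < p)%N then `]0, +oo[%classic else setT.

(* iterated Lebesgue integral over the listed coordinates (for nonnegative
   integrands this is, by Tonelli, the integral w.r.t. Lebesgue measure on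
   R^{|L_I|} x (0,oo)^p) *)
Fixpoint iint (s : seq nat) (f : (nat -> R) -> \bar R) (v : nat -> R) : \bar R :=
  match s with
  | [::] => f v
  | k :: s' =>
    (\int[@lebesgue_measure R]_(t in coord_dom k)
        iint s' f (fun n => if n == k then t else v n))%E
  end.

Definition integral_LD (E : rel 'I_p) (f : (nat -> R) -> \bar R) : \bar R :=
  iint (coords E) f (fun _ => 0).

End GWishart.

(* Let T_k = sum_i L_ik^2 >= 1 be the squared norm of the k-th column of L and
   lam > 0 a coercivity constant of U, i.e. c^T U c >= lam |c|^2.  Then
   tr(Omega U) = sum_k D_k L_k^T U L_k >= lam sum_k D_k T_k, and T_k dominates
   both 1 and each of the nu_k squared free entries of column k.  Hence each
   factor D_k^(delta_k/2 + nu_k) exp(-lam D_k T_k / 2) of pi* is bounded by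
   C_k (1 + D_k^2)^-1 prod_i (1 + L_ik^2)^-1, so pi* is dominated by a product
   of Cauchy densities in all coordinates, which is integrable.  Since
   |Omega_ij| <= sum_k D_k T_k and y exp(-lam y / 4) is bounded, the same
   domination holds for |Omega_ij| pi*. *)

From HB Require Import structures.
From mathcomp Require Import all_boot all_order all_algebra.
From mathcomp Require Import all_classical all_reals all_analysis.
From mathcomp Require Import ring lra measurable_realfun.
Set Implicit Arguments. Unset Strict Implicit. Unset Printing Implicit Defensive.
Import Order.TTheory GRing.Theory Num.Theory.
Import numFieldNormedType.Exports.
Local Open Scope ring_scope.
Local Open Scope classical_set_scope.

Section power_exponential_bounds.
Variable R : realType.

Lemma powR_mul_expR_bounded (b c : R) : 0 <= b -> 0 < c ->
  exists2 M, 0 <= M & forall y, 0 <= y -> y `^ b * expR (- c * y) <= M.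
Proof.
move=> b0 c0; exists (1 + expR (b * ln (b / c))) => [|y y0].
  by rewrite addr_ge0 ?expR_ge0.
have e1 : expR (- c * y) <= 1 by rewrite expR_le1 mulNr oppr_le0 mulr_ge0 // ltW.
have [->|bn0] := eqVneq b 0.
  by rewrite powRr0 mul1r (le_trans e1) // lerDl expR_ge0.
have bp : 0 < b by rewrite lt_def bn0 b0.
move: y0; rewrite le_eqVlt => /predU1P[<-|yp].
  by rewrite powR0 // mul0r addr_ge0 // expR_ge0.
suff : y `^ b * expR (- c * y) <= expR (b * ln (b / c)) by move/le_trans; apply; lra.
rewrite /powR gt_eqF // -expRD ler_expR.
(* [ln z < z] at [z = c y / b], i.e. [b ln y - c y <= b ln (b / c) - b] *)
have z0 : 0 < c * y / b by rewrite divr_gt0 // mulr_gt0.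
have := ltW (ln_sublinear z0); rewrite ln_div ?posrE ?mulr_gt0 // lnM ?posrE //.
rewrite -(ler_pM2l bp) (_ : b * (c * y / b) = c * y); last by field; rewrite gt_eqF.
rewrite (_ : ln (b / c) = ln b - ln c); last by rewrite ln_div.
lra.
Qed.

Definition cauchy_weight (t : R) : R := (1 + t ^+ 2)^-1.

Lemma cauchy_weight_gt0 t : 0 < cauchy_weight t.
Proof. by rewrite invr_gt0 ltr_wpDr // sqr_ge0. Qed.

Lemma prod_cauchy_weight_ge (T : R) (I : finType) (P : pred I) (xs : I -> R) :
  1 <= T -> (forall i, P i -> xs i ^+ 2 <= T) ->
  (2 * T)^-1 ^+ #|P| <= \prod_(i | P i) cauchy_weight (xs i).
Proof.
move=> T1 xsT; have T0 : 0 < T := lt_le_trans ltr01 T1.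
rewrite -prodr_const; apply: ler_prod => i Pi.
apply/andP; split; first by rewrite invr_ge0 mulr_ge0 ?ltW.
rewrite lef_pV2 ?posrE ?mulr_gt0 ?ltr_wpDr ?sqr_ge0 //.
by have := xsT i Pi; lra.
Qed.

Lemma powR_expR_column_bounded (a c : R) (nu : nat) : 0 <= a -> 0 < c ->
  exists2 M, 0 <= M & forall D T, 0 < D -> 1 <= T ->
    D `^ (a + nu%:R) * expR (- c * (D * T)) * (1 + D ^+ 2) * T ^+ nu <= M.
Proof.
move=> a0 c0; set b := a + nu%:R; have b0 : 0 <= b by rewrite addr_ge0.
have [M1 M10 HM1] := powR_mul_expR_bounded b0 c0.
have [M2 M20 HM2] := powR_mul_expR_bounded (addr_ge0 b0 (ler0n _ 2)) c0.
exists (M1 + M2) => [|D T D0 T1]; first exact: addr_ge0.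
have T0 : 0 < T := lt_le_trans ltr01 T1.
set y := D * T; have y0 : 0 < y by rewrite mulr_gt0.
have Dy : D <= y by rewrite /y ler_peMr // ltW.
have powRM z : 0 < z -> z `^ b = z `^ a * z ^+ nu.
  by move=> z0; rewrite -powR_mulrn ?ltW // -powRD // (gt_eqF z0) implybT.
have powR2 : y `^ (b + 2) = y `^ b * y ^+ 2.
  by rewrite -[2]/(2%:R) -powR_mulrn ?ltW // -powRD // (gt_eqF y0) implybT.
(* every factor grows when [D] is replaced by [y = D T >= D] *)
have -> : D `^ b * expR (- c * y) * (1 + D ^+ 2) * T ^+ nu =
    D `^ a * y ^+ nu * (1 + D ^+ 2) * expR (- c * y).
  by rewrite powRM // /y exprMn; ring.
apply: le_trans (lerD (HM1 _ (ltW y0)) (HM2 _ (ltW y0))).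
rewrite powR2 powRM // -mulrDl.
have -> : y `^ a * y ^+ nu + y `^ a * y ^+ nu * y ^+ 2 =
  y `^ a * y ^+ nu * (1 + y ^+ 2) by ring.
rewrite ler_wpM2r ?expR_ge0 //.
have D0' := ltW D0; have y0' := ltW y0.
apply: ler_pM; rewrite ?mulr_ge0 ?powR_ge0 ?exprn_ge0 ?addr_ge0 ?sqr_ge0 //.
- by rewrite ler_pM2r ?exprn_gt0 // ge0_ler_powR.
- by rewrite lerD2l ler_pXn2r.
Qed.

Lemma powR_expR_le_cauchy_weights (d c : R) (nu : nat) : 0 <= d -> 0 < c ->
  exists C, 0 <= C /\ forall (D T : R) (I : finType) (P : pred I) (xs : I -> R),
    #|P| = nu -> 0 < D -> 1 <= T -> (forall i, P i -> xs i ^+ 2 <= T) ->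
    D `^ ((d + 2 * nu%:R) / 2) * expR (- c * (D * T)) <=
    C * cauchy_weight D * \prod_(i | P i) cauchy_weight (xs i).
Proof.
move=> d0 c0.
have [M M0 HM] := powR_expR_column_bounded nu (divr_ge0 d0 (ler0n _ 2)) c0.
exists (2 ^+ nu * M); split => [|D T I P xs Pnu D0 T1 xsT].
  by rewrite mulr_ge0 ?exprn_ge0.
have T0 : 0 < T := lt_le_trans ltr01 T1.
apply: le_trans (ler_wpM2l _ (prod_cauchy_weight_ge T1 xsT)); last first.
  by rewrite !mulr_ge0 ?exprn_ge0 // ltW // cauchy_weight_gt0.
have D2 : 0 < 1 + D ^+ 2 by rewrite ltr_wpDr ?sqr_ge0.
have -> : 2 ^+ nu * M * cauchy_weight D * (2 * T)^-1 ^+ #|P| =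
    M / ((1 + D ^+ 2) * T ^+ nu).
  by rewrite Pnu /cauchy_weight exprVn exprMn; field; rewrite !expf_neq0 ?gt_eqF.
rewrite ler_pdivlMr ?mulr_gt0 ?exprn_gt0 //.
rewrite (_ : (d + 2 * nu%:R) / 2 = d / 2 + nu%:R); last by field.
by move: (HM D T D0 T1); rewrite !mulrA.
Qed.

End power_exponential_bounds.

Section coercivity.
Variable R : realType.

Definition qform n (U : 'M[R]_n) (c : 'I_n -> R) : R :=
  \sum_i \sum_j c i * U i j * c j.
Definition sqnorm n (c : 'I_n -> R) : R := \sum_i c i ^+ 2.

Lemma sqnorm_ge0 n (c : 'I_n -> R) : 0 <= sqnorm c.
Proof. by apply: sumr_ge0 => i _; exact: sqr_ge0. Qed.

Lemma sqnorm_eq0 n (c : 'I_n -> R) : sqnorm c = 0 -> forall i, c i = 0.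
Proof.
move=> /(psumr_eq0P (fun i _ => sqr_ge0 (c i))) c0 i.
by apply/eqP; rewrite -sqrf_eq0 c0.
Qed.

Lemma sqnormZ n (a : R) (c : 'I_n -> R) :
  sqnorm (fun i => a * c i) = a ^+ 2 * sqnorm c.
Proof. by rewrite /sqnorm mulr_sumr; apply: eq_bigr => i _; rewrite exprMn. Qed.

Lemma qformZ n (U : 'M[R]_n) (a : R) (c : 'I_n -> R) :
  qform U (fun i => a * c i) = a ^+ 2 * qform U c.
Proof.
rewrite /qform mulr_sumr; apply: eq_bigr => i _; rewrite mulr_sumr.
by apply: eq_bigr => j _; ring.
Qed.

Lemma qform_mx n (U : 'M[R]_n) (c : 'I_n -> R) :
  ((\col_i c i)^T *m U *m (\col_i c i)) ord0 ord0 = qform U c.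
Proof.
rewrite !mxE /qform exchange_big /=; apply: eq_bigr => j _.
by rewrite !mxE big_distrl /=; apply: eq_bigr => i _; rewrite !mxE.
Qed.

Let continuous_sum n (F : 'I_n -> 'rV[R]_n -> R) :
  (forall i, continuous (F i)) -> continuous (fun v => \sum_i F i v).
Proof.
by move=> cF; apply: (@continuous_big R^o _ +%R 0 predT add_continuous) => i _.
Qed.

Lemma continuous_qform n (U : 'M[R]_n) :
  continuous (fun v : 'rV[R]_n => qform U (v ord0)).
Proof.
apply: continuous_sum => i; apply: continuous_sum => j v.
apply: (@continuousM _ _ (fun v : 'rV[R]_n => v ord0 i * U i j) (fun v => v ord0 j)).
  apply: (@continuousM _ _ (fun v : 'rV[R]_n => v ord0 i) (fun=> U i j)).
    exact: coord_continuous.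
  exact: cst_continuous.
exact: coord_continuous.
Qed.

Lemma continuous_sqnorm n : continuous (fun v : 'rV[R]_n => sqnorm (v ord0)).
Proof.
apply: continuous_sum => i v.
by apply: (@continuousM _ _ (fun v : 'rV[R]_n => v ord0 i) (fun v => v ord0 i));
  exact: coord_continuous.
Qed.

Lemma compact_unit_sphere n : compact [set v : 'rV[R]_n | sqnorm (v ord0) = 1].
Proof.
apply: bounded_closed_compact; last first.
  change (closed ((fun v : 'rV[R]_n => sqnorm (v ord0)) @^-1` [set 1])).
  by apply: preimage_closed; [move=> v _; exact: continuous_sqnorm | exact: closed_eq].
change (\forall M \near +oo,
  globally [set v : 'rV[R]_n | sqnorm (v ord0) = 1] [set v | `|v| <= M]).
near=> M => v /= v1.
rewrite [X in X <= _]/Num.norm /= mx_normrE; apply: bigmax_le => // ij _.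
have : `|v ij.1 ij.2| <= 1.
  rewrite !ord1 -(expr_le1 (n:=2)) // real_normK ?num_real // -v1.
  by rewrite /sqnorm (bigD1 ij.2) //= lerDl sumr_ge0 // => i _; exact: sqr_ge0.
move/le_trans; apply; near: M; exact: nbhs_pinfty_ge.
Unshelve. all: by end_near.
Qed.

(* [lam] is the minimum of the form on the compact unit sphere. *)
Lemma posdef_coercive n (U : 'M[R]_n) : posdef U ->
  exists2 lam, 0 < lam & forall c, lam * sqnorm c <= qform U c.
Proof.
case: n U => [|n] U [_ Upos].
  by exists 1 => // c; rewrite /sqnorm /qform !big_ord0 mulr0.
set S := [set v : 'rV[R]_n.+1 | sqnorm (v ord0) = 1].
have S0 : S !=set0.
  exists (\row_j (j == ord0)%:R); rewrite /S /sqnorm /= (bigD1 ord0) //= big1.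
    by rewrite !mxE eqxx expr1n addr0.
  by move=> i /negbTE; rewrite !mxE => ->; rewrite expr0n.
have [v vS vmin] := EVT_min_rV S0 (@compact_unit_sphere n.+1)
  (continuous_subspaceT (@continuous_qform _ U)).
move: vS; rewrite inE => vS.
exists (qform U (v ord0)) => [|c].
  rewrite -qform_mx; apply: Upos; apply/eqP => /matrixP v0.
  suff : sqnorm (v ord0) = 0 by rewrite vS => /eqP; rewrite oner_eq0.
  by rewrite /sqnorm big1 // => i _; have := v0 i ord0; rewrite !mxE => ->; rewrite expr0n.
have [c0|cn0] := eqVneq (sqnorm c) 0.
  rewrite c0 mulr0 (_ : c = fun i => 0 * c i).
    by rewrite qformZ expr0n mul0r.
  by apply: funext => i; rewrite mul0r (sqnorm_eq0 c0).
set s := Num.sqrt (sqnorm c).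
have s2 : s ^+ 2 = sqnorm c by rewrite sqr_sqrtr // sqnorm_ge0.
have sn0 : s != 0 by rewrite sqrtr_eq0 -ltNge lt_def cn0 sqnorm_ge0.
have tE : (\row_i (s^-1 * c i)) ord0 = (fun i => s^-1 * c i).
  by apply: funext => i; rewrite mxE.
have := vmin (\row_i (s^-1 * c i)); rewrite inE /S /= tE sqnormZ qformZ -s2.
rewrite exprVn mulVf ?expf_neq0 // mulrC ler_pdivlMr ?exprn_gt0 ?lt_def ?sn0 ?sqrtr_ge0 //.
exact.
Qed.

End coercivity.

Section Lmat_entries.
Variables (R : realType) (p : nat) (E : rel 'I_p).
Variables (x : 'I_p -> 'I_p -> R) (D : 'I_p -> R).

Lemma Lcols_lt m (i j : 'I_p) : (j < m)%N -> Lcols E x D m i j = Lcols E x D j.+1 i j.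
Proof.
elim: m => [//|m IH] jm; rewrite [LHS]/= mxE.
case: ltnP => jm'; first by rewrite IH.
have mj : m = j by apply/eqP; rewrite eqn_leq jm' -ltnS jm.
by subst m; rewrite /= mxE ltnn.
Qed.

Lemma Lmat_diag i : Lmat E x D i i = 1.
Proof. by rewrite /Lmat Lcols_lt //= mxE ltnn !eqxx. Qed.

Lemma Lmat_upper (i j : 'I_p) : (i < j)%N -> Lmat E x D i j = 0.
Proof. by move=> ij; rewrite /Lmat Lcols_lt //= mxE ltnn eqxx ij -val_eqE (ltn_eqF ij). Qed.

Lemma Lmat_edge (i j : 'I_p) : (j < i)%N -> E i j -> Lmat E x D i j = x i j.
Proof.
move=> ji Eij; rewrite /Lmat Lcols_lt //= mxE ltnn eqxx -val_eqE (gtn_eqF ji).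
by rewrite ltnNge (ltnW ji) Eij.
Qed.

End Lmat_entries.

Section iterated_integral.
Local Open Scope ereal_scope.
Variables (R : realType) (p : nat).
Local Notation mu := (@lebesgue_measure R).

(* The integrands of [iint] need not be measurable; monotonicity survives since
   the integral of a nonnegative function is a supremum over simple functions. *)
Lemma ge0_le_integral_nonmeasurable (D : set R) (f g : R -> \bar R) :
  (forall x, D x -> 0 <= f x) -> (forall x, D x -> f x <= g x) ->
  \int[mu]_(x in D) f x <= \int[mu]_(x in D) g x.
Proof.
move=> f0 fg; have g0 x : D x -> 0 <= g x by move=> Dx; exact: le_trans (f0 x Dx) (fg x Dx).
rewrite (ge0_integralE mu f0) (ge0_integralE mu g0).
apply: ereal_sup_le => _ [h hf <-]; exists h => // x.
by apply: le_trans (hf x) _; rewrite /patch; case: ifP => // /[1!inE] /fg.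
Qed.

Lemma iint_ge0 s (f : (nat -> R) -> \bar R) v :
  (forall w, 0 <= f w) -> 0 <= iint p s f v.
Proof.
move=> f0; elim: s v => [|k s IH] v //=.
by apply: integral_ge0 => t _; exact: IH.
Qed.

Lemma iint_le s (f g : (nat -> R) -> \bar R) v :
  (forall w, 0 <= f w) ->
  (forall w, (forall k, k \in s -> coord_dom p k (w k)) ->
             (forall k, k \notin s -> w k = v k) -> f w <= g w) ->
  iint p s f v <= iint p s g v.
Proof.
move=> f0; elim: s v => [|k s IH] v /= fg; first by apply: fg => // k; rewrite in_nil.
apply: ge0_le_integral_nonmeasurable => [t _|t Dt]; first exact: iint_ge0.
apply: IH => w ws wv; apply: fg => k'.
  rewrite inE => /orP[/eqP->|]; last exact: ws.
  by case: (boolP (k \in s)) => [/ws //|/wv ->]; rewrite eqxx.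
by rewrite inE negb_or => /andP[kk' ks]; rewrite wv // (negbTE kk').
Qed.

Definition cauchy_mass (n : nat) : R := (if (n < p)%N then pi / 2 else pi)%R.

Lemma cauchy_mass_ge0 n : (0 <= cauchy_mass n)%R.
Proof. by rewrite /cauchy_mass; case: ifP => _; rewrite ?divr_ge0 // pi_ge0. Qed.

Lemma measurable_cauchy_weight : measurable_fun setT (@cauchy_weight R).
Proof. exact: continuous_measurable_fun continuous_oneDsqrV. Qed.

Lemma integral_cauchy_weight n :
  \int[mu]_(t in coord_dom p n) (cauchy_weight t)%:E = (cauchy_mass n)%:E.
Proof.
rewrite /coord_dom /cauchy_mass; case: ifP => _.
  rewrite integral_itv_obnd_cbnd ?integral0y_oneDsqr //.
  by apply/measurable_EFinP; apply: measurable_funTS; exact: measurable_cauchy_weight.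
rewrite ge0_symfun_integralT //.
- rewrite -set_itvcy integral0y_oneDsqr -EFinM; congr EFin.
  by rewrite mulrC -mulrA mulVf ?mulr1.
- by move=> x; exact/ltW/cauchy_weight_gt0.
- exact: continuous_oneDsqrV.
- by move=> x /=; rewrite /cauchy_weight sqrrN.
Qed.

Lemma iint_cauchy_weights s : uniq s -> forall (F : (nat -> R) -> R) v,
  (forall w, (0 <= F w)%R) ->
  (forall w, (forall n, n \notin s -> w n = v n) -> F w = F v) ->
  iint p s (fun w => (F w * \prod_(n <- s) cauchy_weight (w n))%:E) v =
  (F v * \prod_(n <- s) cauchy_mass n)%:E.
Proof.
elim: s => [|k s IH] /=; first by move=> _ F v _ _; rewrite !big_nil.
move=> /andP[ks us] F v F0 Fv.
set F' := fun w => (F w * cauchy_weight (w k))%R.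
have -> : (fun w => (F w * \prod_(n <- k :: s) cauchy_weight (w n))%:E) =
    (fun w => (F' w * \prod_(n <- s) cauchy_weight (w n))%:E).
  by apply: funext => w; rewrite big_cons /F' mulrA.
transitivity (\int[mu]_(t in coord_dom p k)
    ((F v * \prod_(n <- s) cauchy_mass n)%:E * (cauchy_weight t)%:E)).
  apply: eq_integral => t _; set v' := fun n => if n == k then t else v n.
  have Fv' : F v' = F v.
    by apply: Fv => n nks; rewrite /v'; case: eqP => // nk; rewrite nk mem_head in nks.
  rewrite IH // => [|w|w wv]; first by rewrite /F' /v' eqxx Fv' -EFinM mulrAC.
    by rewrite /F' mulr_ge0 // ltW // cauchy_weight_gt0.
  rewrite /F' (wv k ks) Fv'; congr (_ * _)%R.
  apply: Fv => n; rewrite inE negb_or => /andP[nk ns].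
  by rewrite wv // /v' (negbTE nk).
rewrite ge0_integralZl_EFin //.
- by rewrite integral_cauchy_weight -EFinM big_cons; congr EFin; ring.
- by rewrite /coord_dom; case: ifP => _; [exact: measurable_itv | exact: measurableT].
- by move=> x _; rewrite lee_fin ltW // cauchy_weight_gt0.
- by apply/measurable_EFinP; apply: measurable_funTS; exact: measurable_cauchy_weight.
- by rewrite mulr_ge0 // prodr_ge0 // => n _; exact: cauchy_mass_ge0.
Qed.

End iterated_integral.

Section gwishart_domination.
Variables (R : realType) (p : nat) (E : rel 'I_p) (U : 'M[R]_p) (delta : 'I_p -> R).

Local Notation L w := (Lmat E (xof w) (Dof w)).

Definition colnorm (w : nat -> R) (k : 'I_p) : R := sqnorm (fun i => L w i k).

Definition Dcolnorm (w : nat -> R) : R := \sum_k Dof w k * colnorm w k.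

Definition tr_OmegaU (w : nat -> R) : R := \sum_(i < p) \sum_(j < p) U i j *
  \sum_(k < p | (k <= i)%N && (k <= j)%N) L w i k * L w j k * Dof w k.

Definition Dpow (w : nat -> R) : R :=
  \prod_k Dof w k `^ ((delta k + 2 * (nu E k)%:R) / 2).

Lemma pistarE (w : nat -> R) :
  pistar E U delta (xof w) (Dof w) = Dpow w * expR (- (1/2) * tr_OmegaU w).
Proof. by []. Qed.

Lemma Dpow_ge0 (w : nat -> R) : 0 <= Dpow w.
Proof. by apply: prodr_ge0 => k _; exact: powR_ge0. Qed.

Lemma pistar_ge0 (w : nat -> R) : 0 <= pistar E U delta (xof w) (Dof w).
Proof. by rewrite pistarE mulr_ge0 ?Dpow_ge0 ?expR_ge0. Qed.

Lemma colnorm_ge_sqr (w : nat -> R) k i : L w i k ^+ 2 <= colnorm w k.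
Proof.
by rewrite /colnorm /sqnorm (bigD1 i) //= lerDl sumr_ge0 // => l _; exact: sqr_ge0.
Qed.

Lemma colnorm_ge1 (w : nat -> R) k : 1 <= colnorm w k.
Proof. by have := colnorm_ge_sqr w k k; rewrite Lmat_diag expr1n. Qed.

Lemma Dcolnorm_ge0 (w : nat -> R) : (forall k : 'I_p, 0 <= w k) -> 0 <= Dcolnorm w.
Proof.
move=> w0; apply: sumr_ge0 => k _.
by rewrite mulr_ge0 ?(le_trans ler01 (colnorm_ge1 _ _)) ?w0.
Qed.

Lemma tr_OmegaU_cols (w : nat -> R) :
  tr_OmegaU w = \sum_k Dof w k * qform U (fun i => L w i k).
Proof.
transitivity (\sum_i \sum_j U i j * \sum_k L w i k * L w j k * Dof w k).
  apply: eq_bigr => i _; apply: eq_bigr => j _; congr (_ * _).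
  rewrite big_mkcond; apply: eq_bigr => k _; case: ifPn => //.
  rewrite negb_and -!ltnNge => /orP[ik|jk]; first by rewrite Lmat_upper // !mul0r.
  by rewrite (Lmat_upper _ _ _ jk) mulr0 mul0r.
rewrite /qform; under eq_bigr do under eq_bigr do rewrite mulr_sumr.
under eq_bigr do rewrite exchange_big; rewrite exchange_big.
apply: eq_bigr => k _; rewrite mulr_sumr; apply: eq_bigr => i _.
by rewrite mulr_sumr; apply: eq_bigr => j _; ring.
Qed.

Lemma tr_OmegaU_ge lam (w : nat -> R) :
  (forall c, lam * sqnorm c <= qform U c) -> (forall k : 'I_p, 0 <= w k) ->
  lam * Dcolnorm w <= tr_OmegaU w.
Proof.
move=> Ucoer w0; rewrite tr_OmegaU_cols mulr_sumr; apply: ler_sum => k _.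
by rewrite mulrCA; apply: ler_wpM2l; [exact: w0 | exact: Ucoer].
Qed.

Lemma Omega_entry (w : nat -> R) i j :
  Omega E (xof w) (Dof w) i j = \sum_k L w i k * Dof w k * L w j k.
Proof. by rewrite /Omega mul_mx_diag mxE; apply: eq_bigr => k _; rewrite !mxE. Qed.

Lemma normOmega_le_Dcolnorm (w : nat -> R) i j : (forall k : 'I_p, 0 <= w k) ->
  `|Omega E (xof w) (Dof w) i j| <= Dcolnorm w.
Proof.
move=> w0; rewrite Omega_entry; apply: le_trans (ler_norm_sum _ _ _) _.
apply: ler_sum => k _; rewrite !normrM (ger0_norm (w0 k)) mulrAC mulrC.
apply: (ler_wpM2l (w0 k)).
(* [2 |a| |b| <= a^2 + b^2 <= 2 T] *)
have hi := colnorm_ge_sqr w k i; have hj := colnorm_ge_sqr w k j.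
rewrite -[L w i k ^+ 2]real_normK ?num_real // in hi.
rewrite -[L w j k ^+ 2]real_normK ?num_real // in hj.
by have := sqr_ge0 (`|L w i k| - `|L w j k|); nra.
Qed.

Lemma coords_uniq : uniq (coords E).
Proof.
rewrite /coords cat_uniq iota_uniq /=; apply/andP; split.
  apply/hasPn => n /mapP [ij _ ->].
  by rewrite mem_iota /= -leqNgt -addnA leq_addr.
rewrite map_inj_in_uniq ?enum_uniq // => -[i j] [i' j'] _ _ /= /eqP.
rewrite -!addnA eqn_add2l => /eqP h.
have p0 : (0 < p)%N := leq_ltn_trans (leq0n i) (ltn_ord i).
have ii' : i = i' :> nat.
  by have := congr1 (divn^~ p) h; rewrite !divnMDl // !divn_small // !addn0.
have jj' : j = j' :> nat.
  by have := congr1 (modn^~ p) h; rewrite !modnMDl !modn_small.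
by congr pair; apply: val_inj.
Qed.

Lemma prod_coords (F : R -> R) (w : nat -> R) : \prod_(n <- coords E) F (w n) =
  \prod_(k < p) F (w k) *
  \prod_(k < p) \prod_(i < p | (k < i)%N && E i k) F (xof w i k).
Proof.
rewrite /coords big_cat /=.
have -> : iota 0 p = index_iota 0 p by rewrite /index_iota subn0.
rewrite big_mkord; congr (_ * _).
rewrite big_map big_enum /= (exchange_big_dep predT) //=.
by rewrite pair_big_dep; apply: eq_bigl => -[a b].
Qed.

Lemma coord_dom_coords_gt0 (w : nat -> R) :
  (forall n, n \in coords E -> coord_dom p n (w n)) -> forall k : 'I_p, 0 < w k.
Proof.
move=> wdom k; have := wdom k; rewrite /coords mem_cat mem_iota add0n ltn_ord.
by move=> /(_ isT); rewrite /coord_dom ltn_ord /= in_itv /= andbT.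
Qed.

Lemma integral_LD_cauchy_dominated (f : (nat -> R) -> R) :
  (forall w, 0 <= f w) ->
  (exists2 C, 0 <= C & forall w : nat -> R, (forall k : 'I_p, 0 < w k) ->
     f w <= C * \prod_(n <- coords E) cauchy_weight (w n)) ->
  (integral_LD E (fun w => (f w)%:E) < +oo)%E.
Proof.
move=> f0 [C C0 fC]; apply: (@le_lt_trans _ _ (integral_LD E
    (fun w => (C * \prod_(n <- coords E) cauchy_weight (w n))%:E))).
  apply: iint_le => [w|w wdom _]; first by rewrite lee_fin.
  by rewrite lee_fin; apply: fC; exact: coord_dom_coords_gt0.
by rewrite /integral_LD iint_cauchy_weights ?coords_uniq ?ltry.
Qed.

Hypothesis delta_gt0 : forall k, 0 < delta k.

Lemma Dpow_expR_le_cauchy c : 0 < c ->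
  exists2 C, 0 <= C & forall w : nat -> R, (forall k : 'I_p, 0 < w k) ->
    Dpow w * expR (- c * Dcolnorm w) <=
    C * \prod_(n <- coords E) cauchy_weight (w n).
Proof.
move=> c0.
have /choice [C HC] := fun k =>
  powR_expR_le_cauchy_weights (nu E k) (ltW (delta_gt0 k)) c0.
exists (\prod_k C k) => [|w w0].
  by apply: prodr_ge0 => k _; case: (HC k).
rewrite /Dpow /Dcolnorm mulr_sumr expR_sum -big_split prod_coords mulrA -!big_split /=.
apply: ler_prod => k _; rewrite mulr_ge0 ?powR_ge0 ?expR_ge0 //=.
case: (HC k) => _; apply; [|exact: w0|exact: colnorm_ge1|].
  rewrite /nu; apply: eq_card => i.
  by apply/idP/idP => [h|/set_mem //]; apply: mem_set.
move=> i /andP[ki Eik]; rewrite -(Lmat_edge (xof w) (Dof w) ki Eik).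
exact: colnorm_ge_sqr.
Qed.

Lemma pistar_le_Dpow_expR lam (w : nat -> R) :
  (forall c, lam * sqnorm c <= qform U c) -> (forall k : 'I_p, 0 <= w k) ->
  pistar E U delta (xof w) (Dof w) <= Dpow w * expR (- (lam / 2) * Dcolnorm w).
Proof.
move=> Ucoer w0; rewrite pistarE ler_wpM2l ?Dpow_ge0 // ler_expR.
by have := tr_OmegaU_ge Ucoer w0; lra.
Qed.

Hypothesis Upd : posdef U.

Lemma pistar_le_cauchy :
  exists2 C, 0 <= C & forall w : nat -> R, (forall k : 'I_p, 0 < w k) ->
  pistar E U delta (xof w) (Dof w) <= C * \prod_(n <- coords E) cauchy_weight (w n).
Proof.
have [lam lam0 Ucoer] := posdef_coercive Upd.
have [C C0 HC] := Dpow_expR_le_cauchy (divr_gt0 lam0 (ltr0n _ 2)).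
exists C => // w w0; apply: le_trans (HC w w0).
exact: pistar_le_Dpow_expR Ucoer (fun k => ltW (w0 k)).
Qed.

Lemma normOmega_pistar_le_cauchy i j :
  exists2 C, 0 <= C & forall w : nat -> R, (forall k : 'I_p, 0 < w k) ->
    `|Omega E (xof w) (Dof w) i j| * pistar E U delta (xof w) (Dof w) <=
    C * \prod_(n <- coords E) cauchy_weight (w n).
Proof.
have [lam lam0 Ucoer] := posdef_coercive Upd.
have lam4 : 0 < lam / 4 by rewrite divr_gt0.
have [C C0 HC] := Dpow_expR_le_cauchy lam4.
have [M M0 HM] := powR_mul_expR_bounded ler01 lam4.
exists (M * C) => [|w w0]; first exact: mulr_ge0.
have w0' (k : 'I_p) : 0 <= w k := ltW (w0 k).
apply: le_trans (ler_pM (normr_ge0 _) (pistar_ge0 _)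
  (normOmega_le_Dcolnorm i j w0') (pistar_le_Dpow_expR Ucoer w0')) _.
set Y := Dcolnorm w; have Y0 : 0 <= Y := Dcolnorm_ge0 w0'.
(* half of the exponential decay absorbs the factor [Y] *)
have -> : Y * (Dpow w * expR (- (lam / 2) * Y)) =
    (Y `^ 1 * expR (- (lam / 4) * Y)) * (Dpow w * expR (- (lam / 4) * Y)).
  have e : expR (- (lam / 2) * Y) = expR (- (lam / 4) * Y) * expR (- (lam / 4) * Y).
    by rewrite -expRD; congr expR; field.
  by rewrite powRr1 // e; ring.
rewrite -[M * C * _]mulrA; apply: ler_pM; rewrite ?mulr_ge0 ?powR_ge0 ?expR_ge0 ?Dpow_ge0 //.
  exact: HM.
exact: HC.
Qed.

End gwishart_domination.

Theorem theorem1 (R : realType) (p : nat) (E : rel 'I_p) (U : 'M[R]_p)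
  (delta : 'I_p -> R) :
  undirected_graph E -> posdef U -> (forall i, 0 < delta i) ->
  (integral_LD E
     (fun v => (pistar E U delta (xof v) (Dof v))%:E) < +oo)%E /\
  (forall i j : 'I_p,
     integral_LD E
       (fun v => (`|Omega E (xof v) (Dof v) i j| *
                  pistar E U delta (xof v) (Dof v))%:E) < +oo)%E.
Proof.
move=> _ Upd delta_gt0; split => [|i j]; apply: integral_LD_cauchy_dominated.
- exact: pistar_ge0.
- exact: pistar_le_cauchy.
- by move=> w; rewrite mulr_ge0 ?pistar_ge0.
- exact: normOmega_pistar_le_cauchy.
Qed.
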